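(* Let $(x(n))_{n\geq0}$ and $(y(n))_{n\geq0}$ be strictly increasing sequences of nonnegative integers such that $\{x(n): n\geq 0\} \cup \{y(n): n \geq 0\} = \mathbb{N}$, $x(0)=1$, $y(0)=0$, and for all $n \geq 0$, $$x(x(n)) = y(x(n)) - 1 \quad\text{and}\quad y(y(n)) = x(y(n)) - 1.$$ Then $x(n) = a(n)$ and $y(n) = b(n)$ for all $n \geq 0$.
   Context: $\mathbb{N} = \{0,1,2,\ldots\}$. A nonnegative integer is odious if the sum of its binary digits is odd and evil if it is even. $(a(n))_{n\geq0}$ is the increasing sequence of odious numbers and $(b(n))_{n\geq 0}$ the increasing sequence of evil numbers, both indexed from $0$. *)

From mathcomp Require Import all_boot.
Set Implicit Arguments. Unset Strict Implicit. Unset Printing Implicit Defensive.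

Fixpoint binsum_aux (fuel n : nat) : nat :=
  match fuel with
  | 0 => 0
  | f.+1 => if n is 0 then 0 else odd n + binsum_aux f n./2
  end.
Definition binsum (n : nat) : nat := binsum_aux n n.

Definition odious (n : nat) : bool := odd (binsum n).
Definition evil (n : nat) : bool := ~~ odd (binsum n).

(* The increasing enumerations, indexed from 0.  Among {2k, 2k+1} exactly one
   is odious and one is evil, so the n-th odious (resp. evil) number is < 2n+2;
   hence listing the odious (evil) numbers below 2n+2 in increasing order and
   taking the item of index n gives the n-th one. *)
Definition a (n : nat) : nat := nth 0 [seq m <- iota 0 (2 * n + 2) | odious m] n.
Definition b (n : nat) : nat := nth 0 [seq m <- iota 0 (2 * n + 2) | evil m] n.

Example a_test : [seq a n | n <- iota 0 8] = [:: 1; 2; 4; 7; 8; 11; 13; 14]. Proof. by []. Qed.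
Example b_test : [seq b n | n <- iota 0 8] = [:: 0; 3; 5; 6; 9; 10; 12; 15]. Proof. by []. Qed.

(* Both halves of the hypotheses say that y (x k) and x (y k) sit right next to
   x (x k) and y (y k); since every n is a value of x or of y, this forces
   |x n - y n| = 1 for all n.  For complementary increasing sequences this
   pins down {x n, y n} = {2n, 2n+1}, so x n = 2n + [x n odd].  Evaluating
   x (x k) = 2 x k and x (y k) = 2 y k + 1 at k = m then shows that the
   parity of x satisfies the recursion of odiousness: unchanged at 2m,
   flipped at 2m+1. *)

From mathcomp Require Import all_boot zify.

Lemma binsum_aux_fuel f g n : n <= f -> n <= g -> binsum_aux f n = binsum_aux g n.
Proof.
elim: f g n => [|f IHf] [|g] [|n] //= hf hg.
by congr (_ + _); apply: IHf; rewrite -?mul2n; lia.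
Qed.

Lemma binsum_half n : 0 < n -> binsum n = odd n + binsum n./2.
Proof.
case: n => [|n] // _; rewrite {1}/binsum /=.
by congr (_ + _); apply: binsum_aux_fuel; rewrite -?mul2n; lia.
Qed.

Lemma binsum_double m : binsum (2 * m) = binsum m.
Proof.
case: m => [|m] //.
by rewrite binsum_half mul2n ?double_gt0 // odd_double doubleK.
Qed.

Lemma binsum_doubleS m : binsum (2 * m).+1 = (binsum m).+1.
Proof. by rewrite binsum_half // mul2n /= odd_double uphalf_double. Qed.

(* Of 2k and 2k+1, the first has the parity of binsum k and the second the
   opposite one, so each parity class meets {2k, 2k+1} exactly once. *)
Lemma filter_binsum_parity c n :
  [seq m <- iota 0 (2 * n) | odd (binsum m) == c]
  = [seq 2 * k + (odd (binsum k) != c) | k <- iota 0 n].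
Proof.
elim: n => [|n IHn] //.
have -> : 2 * n.+1 = 2 * n + 2 by lia.
rewrite iotaD filter_cat IHn -[n.+1]addn1 iotaD map_cat /=.
rewrite binsum_double binsum_doubleS.
congr (_ ++ _); rewrite /= !add0n; clear IHn.
by case: (odd (binsum n)); case: c; rewrite ?addn0 ?addn1.
Qed.

Lemma nth_filter_binsum_parity c n :
  nth 0 [seq m <- iota 0 (2 * n + 2) | odd (binsum m) == c] n
  = 2 * n + (odd (binsum n) != c).
Proof.
by rewrite -mulnSr filter_binsum_parity (nth_map 0) ?size_iota // nth_iota.
Qed.

Lemma aE n : a n = 2 * n + ~~ odd (binsum n).
Proof.
rewrite /a (@eq_filter _ odious (fun m => odd (binsum m) == true)).
  by rewrite nth_filter_binsum_parity eqb_id.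
by move=> m; rewrite eqb_id.
Qed.

Lemma bE n : b n = 2 * n + odd (binsum n).
Proof.
rewrite /b (@eq_filter _ evil (fun m => odd (binsum m) == false)).
  by rewrite nth_filter_binsum_parity; case: (odd (binsum n)).
by move=> m; rewrite eqbF_neg.
Qed.

Lemma parity_binsum_unique (f : nat -> bool) :
  f 0 = false -> (forall m, f (2 * m) = f m) -> (forall m, f (2 * m).+1 = ~~ f m) ->
  forall n, f n = odd (binsum n).
Proof.
move=> f0 f_double f_doubleS; elim/ltn_ind => -[|n] IHn; first by rewrite f0.
have half_lt : n.+1./2 < n.+1 by rewrite ltn_half_double // -addnn; lia.
rewrite -(odd_double_half n.+1) -mul2n.
case: (odd n.+1) => /=.
- by rewrite add1n f_doubleS binsum_doubleS IHn.
- by rewrite add0n f_double binsum_double IHn.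
Qed.

Section ComplementarySequences.

Variables x y : nat -> nat.
Hypothesis x_incr : {homo x : m n / m < n}.
Hypothesis y_incr : {homo y : m n / m < n}.
Hypothesis xy_cover : forall k, (exists n, x n = k) \/ (exists n, y n = k).
Hypothesis xy_disjoint : forall i j, x i <> y j.
Hypothesis xy_adjacent : forall n, x n = (y n).+1 \/ y n = (x n).+1.

(* Below index n both sequences already fill [0, 2n), so neither x n nor y n
   can go below 2n, while 2n itself must be taken at an index >= n. *)
Lemma complementary_pairs n :
  (x n = 2 * n /\ y n = (2 * n).+1) \/ (x n = (2 * n).+1 /\ y n = 2 * n).
Proof.
elim/ltn_ind: n => n IHn.
have x_ge : 2 * n <= x n.
  rewrite leqNgt; apply/negP => x_lt.
  have lt_n : x n %/ 2 < n by lia.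
  by move: (IHn _ lt_n) (x_incr _ _ lt_n) (xy_disjoint n (x n %/ 2)); lia.
have y_ge : 2 * n <= y n.
  rewrite leqNgt; apply/negP => y_lt.
  have lt_n : y n %/ 2 < n by lia.
  by move: (IHn _ lt_n) (y_incr _ _ lt_n) (xy_disjoint (y n %/ 2) n); lia.
have min_le : minn (x n) (y n) <= 2 * n.
  case: (xy_cover (2 * n)) => -[i e]; case: (ltnP i n) => [lt_in | le_ni].
  - by have := IHn _ lt_in; lia.
  - by have := ltnW_homo x_incr le_ni; lia.
  - by have := IHn _ lt_in; lia.
  - by have := ltnW_homo y_incr le_ni; lia.
by have := xy_adjacent n; lia.
Qed.

End ComplementarySequences.

Section OdiousEvilCharacterization.

Variables x y : nat -> nat.
Hypothesis hx : {homo x : m n / m < n}.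
Hypothesis hy : {homo y : m n / m < n}.
Hypothesis hcover : forall k, (exists n, x n = k) \/ (exists n, y n = k).
Hypothesis hx0 : x 0 = 1.
Hypothesis hxx : forall n, x (x n) = y (x n) - 1.
Hypothesis hyy : forall n, y (y n) = x (y n) - 1.

Lemma x_gt0 n : 0 < x n.
Proof.
by case: n => [|n]; [rewrite hx0 | have := hx _ _ (ltn0Sn n); rewrite hx0; lia].
Qed.

Lemma y_x_succ k : y (x k) = (x (x k)).+1.
Proof. by have := hxx k; have := x_gt0 (x k); lia. Qed.

Lemma x_y_succ k : x (y k) = (y (y k)).+1.
Proof. by have := hyy k; have := x_gt0 (y k); lia. Qed.

Lemma x_neq_y i j : x i <> y j.
Proof. by move=> xy_eq; have := y_x_succ i; have := x_y_succ j; rewrite xy_eq; lia. Qed.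

Lemma xy_adjacent n : x n = (y n).+1 \/ y n = (x n).+1.
Proof.
by case: (hcover n) => -[k <-]; [have := y_x_succ k | have := x_y_succ k]; lia.
Qed.

Lemma xy_pairs n :
  (x n = 2 * n /\ y n = (2 * n).+1) \/ (x n = (2 * n).+1 /\ y n = 2 * n).
Proof. exact: complementary_pairs hx hy hcover x_neq_y xy_adjacent n. Qed.

Lemma x_x_double k : x (x k) = 2 * x k.
Proof. by have := y_x_succ k; have := xy_pairs (x k); lia. Qed.

Lemma x_y_double k : x (y k) = (2 * y k).+1.
Proof. by have := x_y_succ k; have := xy_pairs (y k); lia. Qed.

Lemma even_x_binsum n : ~~ odd (x n) = odd (binsum n).
Proof.
apply: (@parity_binsum_unique (fun n => ~~ odd (x n))) => [|m|m] /=.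
- by rewrite hx0.
- case: (xy_pairs m) => -[x_m y_m].
  + by rewrite -{1}x_m x_x_double x_m !mul2n ?oddS ?odd_double.
  + by rewrite -{1}y_m x_y_double y_m x_m !mul2n ?oddS ?odd_double.
- case: (xy_pairs m) => -[x_m y_m].
  + by rewrite -{1}y_m x_y_double y_m x_m !mul2n ?oddS ?odd_double.
  + by rewrite -{1}x_m x_x_double x_m !mul2n ?oddS ?odd_double.
Qed.

Lemma xy_odious_evil n : x n = a n /\ y n = b n.
Proof.
rewrite aE bE -even_x_binsum negbK.
by case: (xy_pairs n) => -[-> ->]; rewrite mul2n ?oddS odd_double addn0 addn1.
Qed.

End OdiousEvilCharacterization.

(* [hy0] is redundant: x starts at 1 and increases, so 0 must be y 0. *)
Theorem theorem5 (x y : nat -> nat)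
  (hx : forall m n, m < n -> x m < x n)
  (hy : forall m n, m < n -> y m < y n)
  (hcover : forall k : nat, (exists n, x n = k) \/ (exists n, y n = k))
  (hx0 : x 0 = 1) (hy0 : y 0 = 0)
  (hxx : forall n, x (x n) = y (x n) - 1)
  (hyy : forall n, y (y n) = x (y n) - 1) :
  forall n, x n = a n /\ y n = b n.
Proof. exact: xy_odious_evil hx hy hcover hx0 hxx hyy. Qed.
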